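(* Reduction Rule 3 is safe: if \((G',k')\) is obtained from an instance \((G,k)\) of Vertex Cover by applying Reduction Rule 3, then \(k'+MM(G')-2LP(G')\leq k+MM(G)-2LP(G)\).
   Context: All graphs are finite, undirected and simple. An instance of Vertex Cover is a pair \((G,k)\), \(k\in\mathbb{N}\). \(MM(G)\) is the size of a maximum matching. \(LPVC(G)\) is the LP: minimize \(\sum_v x_v\) subject to \(x_u+x_v\ge1\) for each edge \(\{u,v\}\) and \(0\le x_v\le1\); \(LP(G)\) is its optimum value. For \(X\subseteq V(G)\), \(N(X)\) is the set of vertices outside \(X\) adjacent to some vertex of \(X\); for an independent set \(Z\), \(\mathrm{surplus}(Z)=|N(Z)|-|Z|\). Reduction Rule 3 applies to \((G,k)\) when (i) the all-\(\frac12\) assignment is the unique optimum solution of \(LPVC(G)\), (ii) there is no independent set \(Z\) with \(\mathrm{surplus}(Z)=1\) and \(N(Z)\) non-independent, and (iii) there is an independent set \(Z\subseteq V(G)\) with \(\mathrm{surplus}(Z)=1\) such that \(N(Z)\) is an independent set in \(G\). It then removes \(Z\) and identifies the vertices of \(N(Z)\): \(G'\) is obtained from \(G\) by deleting \(Z\cup N(Z)\), adding a new vertex \(z\), and making \(z\) adjacent to every vertex of \(N(N(Z))\setminus Z\); and \(k'=k-|Z|\). *)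

From HB Require Import structures.
From mathcomp Require Import all_boot all_order all_algebra.
From mathcomp Require Import classical_sets reals.
Set Implicit Arguments. Unset Strict Implicit. Unset Printing Implicit Defensive.
Import Order.TTheory GRing.Theory Num.Theory.

(* A finite simple undirected graph on vertex type T is a symmetric,
   irreflexive relation e : rel T (vertex set = all of T). *)
Definition simple_graph (T : finType) (e : rel T) : Prop :=
  symmetric e /\ irreflexive e.

Section Graphs.
Variables (T : finType) (e : rel T).

Definition independent (X : {set T}) : bool :=
  [forall u in X, forall v in X, ~~ e u v].

Definition nbhd (X : {set T}) : {set T} :=
  [set v | (v \notin X) && [exists u in X, e u v]].

Definition surplus (Z : {set T}) : int := (#|nbhd Z|%:Z - #|Z|%:Z)%R.

Definition is_edge (A : {set T}) : bool :=
  [exists u, exists v, e u v && (A == [set u; v])].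
Definition matching (M : {set {set T}}) : bool :=
  [forall A in M, is_edge A] && finset.trivIset M.

Definition MM : nat := \max_(M : {set {set T}} | matching M) #|M|.

Local Open Scope ring_scope.
Variable R : realType.

Definition lpvc_feasible (x : T -> R) : Prop :=
  (forall u v, e u v -> 1 <= x u + x v) /\ (forall v, 0 <= x v <= 1).

Definition lp_obj (x : T -> R) : R := \sum_(v : T) x v.

Definition LP : R := inf [set lp_obj x | x in lpvc_feasible].

Definition lpvc_optimal (x : T -> R) : Prop :=
  lpvc_feasible x /\ lp_obj x = LP.

Definition half_unique_opt : Prop :=
  lpvc_optimal (fun _ => 2^-1) /\
  forall x, lpvc_optimal x -> forall v, x v = 2^-1.
End Graphs.

(* Graph G' of Reduction Rule 3: vertices are those of V(G) \ (Z ∪ N(Z)) (as a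
   subtype) plus a fresh vertex z (= None); z is adjacent to exactly the vertices
   of N(N(Z)) \ Z. *)
Section RR3.
Variables (T : finType) (e : rel T) (Z : {set T}).

Definition rr3_keep : {set T} := ~: (Z :|: nbhd e Z).
Definition rr3_vertex : finType := option {x : T | x \in rr3_keep}.

Definition rr3_edge : rel rr3_vertex := fun a b =>
  match a, b with
  | Some a', Some b' => e (val a') (val b')
  | None, Some b' => val b' \in nbhd e (nbhd e Z) :\: Z
  | Some a', None => val a' \in nbhd e (nbhd e Z) :\: Z
  | None, None => false
  end.
End RR3.
Arguments rr3_vertex [T] e Z.
Arguments rr3_edge [T] e Z _ _.

(* Since the all-1/2 assignment is the unique optimum of LPVC(G), every nonempty
   independent set Y has |N(Y)| > |Y|: otherwise lowering Y to 0 and raising N(Y)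
   to 1 would give a second optimum.  By Hall's theorem, Z can therefore be matched
   into N(Z) minus any single vertex y.  Choosing y adjacent to the partner of the
   merged vertex z in a maximum matching M' of G', the edges of M' (with z read as y)
   and this matching of Z form a matching of G, so MM(G') + |Z| <= MM(G).
   Conversely, a feasible x' for LPVC(G') lifts to G by taking 1 - x'(z) on Z,
   x'(z) on N(Z) and x' elsewhere; as |N(Z)| = |Z| + 1 this costs exactly |Z| more,
   so LP(G) <= LP(G') + |Z|.  With k' = k - |Z| the two bounds give the claim. *)

From mathcomp Require Import all_boot all_order all_algebra.
From mathcomp Require Import reals.
From mathcomp Require Import zify lra.
Set Implicit Arguments. Unset Strict Implicit. Unset Printing Implicit Defensive.
Import Order.TTheory GRing.Theory Num.Theory.

Section HallMarriage.
Variables (T : finType) (r : rel T).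
Implicit Types (A B Y W : {set T}) (a b : T) (f : T -> T).

Definition nbhd_in (B Y : {set T}) : {set T} := [set b in B | [exists a in Y, r a b]].

Definition hall_condition (A B : {set T}) : Prop :=
  forall Y : {set T}, Y \subset A -> #|Y| <= #|nbhd_in B Y|.

Definition matches_into (A B : {set T}) (f : T -> T) : Prop :=
  {in A &, injective f} /\ {in A, forall a, f a \in B /\ r a (f a)}.

Lemma nbhd_inP B Y b :
  reflect (b \in B /\ exists2 a, a \in Y & r a b) (b \in nbhd_in B Y).
Proof.
rewrite inE; apply: (iffP andP) => [[bB /existsP[a /andP[aY rab]]]|[bB [a aY rab]]].
  by split=> //; exists a.
by split=> //; apply/existsP; exists a; rewrite aY.
Qed.

Lemma matches_into_card0 A B f : #|A| = 0 -> matches_into A B f.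
Proof. by move/card0_eq=> A0; split=> [x y|x]; rewrite A0. Qed.

Lemma matches_into_set1 a b : r a b -> matches_into [set a] [set b] (fun=> b).
Proof. by move=> rab; split=> [x y /set1P-> /set1P->|x /set1P->]; rewrite ?set11. Qed.

Lemma matches_intoS A B B' f :
  B \subset B' -> matches_into A B f -> matches_into A B' f.
Proof. by move=> sBB' [inj fP]; split=> // a /fP[/(subsetP sBB') fB rf]. Qed.

Lemma matches_into_glue Y A B1 B2 f1 f2 :
    [disjoint B1 & B2] -> matches_into Y B1 f1 -> matches_into (A :\: Y) B2 f2 ->
  matches_into A (B1 :|: B2) (fun a => if a \in Y then f1 a else f2 a).
Proof.
move=> dB [inj1 f1P] [inj2 f2P].
have AYP a : a \in A -> a \notin Y -> a \in A :\: Y by move=> aA aY; rewrite inE aY.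
have cross x y : x \in Y -> y \in A -> y \notin Y -> f1 x != f2 y.
  move=> xY yA yY; have [/= f1B _] := f1P x xY; have [/= f2B _] := f2P y (AYP y yA yY).
  by apply: contraTneq f2B => <-; rewrite (disjointFr dB f1B).
split=> [x y xA yA|a aA] /=.
  case: ifP => xY; case: ifP => yY.
  - exact: inj1.
  - by move/eqP; rewrite (negbTE (cross x y xY yA (negbT yY))).
  - by move/esym/eqP; rewrite (negbTE (cross y x yY xA (negbT xY))).
  - by apply: inj2; apply: AYP; rewrite ?xY ?yY.
case: ifP => aY; first by have [fB ->] := f1P a aY; rewrite inE fB.
by have [fB ->] := f2P a (AYP a aA (negbT aY)); rewrite inE fB orbT.
Qed.

Lemma hall_condition_sub A B Y :
  Y \subset A -> hall_condition A B -> hall_condition Y (nbhd_in B Y).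
Proof.
move=> sYA hall W sWY; apply: leq_trans (hall W (subset_trans sWY sYA)) _.
apply/subset_leq_card/subsetP => b /nbhd_inP[bB [a aW rab]].
have aY : a \in Y := subsetP sWY a aW.
by apply/nbhd_inP; split; [apply/nbhd_inP; split=> //; exists a | exists a].
Qed.

Lemma hall_condition_tight_compl A B Y :
    Y \subset A -> hall_condition A B -> #|nbhd_in B Y| <= #|Y| ->
  hall_condition (A :\: Y) (B :\: nbhd_in B Y).
Proof.
move=> sYA hall tight W sW.
have /andP[sWA dWY] : (W \subset A) && [disjoint W & Y] by rewrite -subsetD.
have sN : nbhd_in B (W :|: Y) \subset nbhd_in (B :\: nbhd_in B Y) W :|: nbhd_in B Y.
  apply/subsetP => b /nbhd_inP[bB [a /setUP[aW|aY] rab]]; rewrite inE.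
    case bY: (b \in nbhd_in B Y); rewrite ?orbT // orbF.
    by apply/nbhd_inP; split; [rewrite inE bY | exists a].
  by apply/orP; right; apply/nbhd_inP; split=> //; exists a.
have := hall (W :|: Y); rewrite subUset sWA sYA => /(_ isT).
rewrite (cardsU W Y) (disjoint_setI0 dWY) cards0 subn0.
have := leq_trans (subset_leq_card sN) (leq_card_setU _ _); lia.
Qed.

Lemma hall_condition_loose A B a b :
    (forall Y : {set T}, Y \subset A -> 0 < #|Y| -> Y != A -> #|Y| < #|nbhd_in B Y|) ->
    a \in A -> hall_condition (A :\ a) (B :\ b).
Proof.
move=> loose aA W sW; have [->|W0] := posnP #|W|; first by [].
have sWA : W \subset A := subset_trans sW (subsetDl A [set a]).
have WnA : W != A.
  by apply: contraTneq aA => <-; apply/negP => /(subsetP sW); rewrite !inE eqxx.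
have := loose W sWA W0 WnA.
have sN : nbhd_in B W :\ b \subset nbhd_in (B :\ b) W.
  apply/subsetP => c /setD1P[cb /nbhd_inP[cB [a' a'W rac]]].
  by apply/nbhd_inP; split; [apply/setD1P | exists a'].
have := subset_leq_card sN; rewrite [#|nbhd_in B W|](cardsD1 b); case: (b \in _); lia.
Qed.

Theorem Hall_marriage A B : hall_condition A B -> exists f, matches_into A B f.
Proof.
move: {2}#|A| (leqnn #|A|) => n; elim: n A B => [|n IH] A B leAn hall.
  by exists id; apply: matches_into_card0; lia.
have [A0|/card_gt0P[a aA]] := posnP #|A|; first by exists id; apply: matches_into_card0.
have [/existsP[Y /and4P[sYA Y0 YA tight]] | loose] :=
  boolP [exists Y : {set T}, [&& Y \subset A, 0 < #|Y|, Y != A & #|nbhd_in B Y| <= #|Y|]].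
  have ltYA : #|Y| < #|A| by apply: proper_card; rewrite properEneq YA.
  have [f1 m1] := IH Y (nbhd_in B Y) ltac:(lia) (hall_condition_sub sYA hall).
  have leAYn : #|A :\: Y| <= n by rewrite cardsD (setIidPr sYA); lia.
  have [f2 m2] := IH _ _ leAYn (hall_condition_tight_compl sYA hall tight).
  exists (fun a => if a \in Y then f1 a else f2 a).
  apply: matches_intoS (matches_into_glue _ m1 m2).
    by rewrite subUset subsetDl andbT; apply/subsetP => b /nbhd_inP[].
  by rewrite disjoints_subset; apply/subsetP => b bN; rewrite in_setC in_setD bN.
have /card_gt0P[b /nbhd_inP[bB [a' /set1P-> rab]]] : 0 < #|nbhd_in B [set a]|.
  by apply: leq_trans (hall _ _); rewrite ?cards1 ?sub1set.
have leAan : #|A :\ a| <= n by move: leAn; rewrite (cardsD1 a A) aA; lia.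
have loose' Y : Y \subset A -> 0 < #|Y| -> Y != A -> #|Y| < #|nbhd_in B Y|.
  move=> sYA Y0 YA; rewrite ltnNge; apply: contra loose => tight.
  by apply/existsP; exists Y; rewrite sYA Y0 YA tight.
have [f2 m2] := IH _ _ leAan (hall_condition_loose b loose' aA).
exists (fun x => if x \in [set a] then b else f2 x).
apply: matches_intoS (matches_into_glue _ (matches_into_set1 rab) m2).
  by rewrite subUset sub1set bB subsetDl.
by rewrite disjoints_subset sub1set !inE eqxx.
Qed.
End HallMarriage.

Section GraphFacts.
Variables (T : finType) (e : rel T).
Implicit Types (X Y : {set T}) (u v : T).

Lemma nbhdP Y v : reflect (v \notin Y /\ exists2 u, u \in Y & e u v) (v \in nbhd e Y).
Proof.
rewrite inE; apply: (iffP andP) => [[vY /existsP[u /andP[uY euv]]]|[vY [u uY euv]]].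
  by split=> //; exists u.
by split=> //; apply/existsP; exists u; rewrite uY.
Qed.

Lemma independentP Y : reflect {in Y &, forall u v, ~~ e u v} (independent e Y).
Proof.
apply: (iffP forallP) => [indep u v uY vY|indep u].
  by have /implyP/(_ uY)/forallP/(_ v)/implyP/(_ vY) := indep u.
by apply/implyP => uY; apply/forallP => v; apply/implyP; apply: indep.
Qed.

Lemma independentS X Y : X \subset Y -> independent e Y -> independent e X.
Proof.
move=> sXY /independentP indep; apply/independentP => u v uX vX.
by apply: indep; apply: (subsetP sXY).
Qed.

Lemma nbhd_independent Y u v :
  independent e Y -> u \in Y -> e u v -> v \in nbhd e Y.
Proof.
move=> /independentP indep uY euv; apply/nbhdP; split; last by exists u.
by apply: contraTN euv => vY; apply: indep.
Qed.

Lemma nbhdS_independent X Y :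
  independent e Y -> X \subset Y -> nbhd e X \subset nbhd e Y.
Proof.
move=> indep sXY; apply/subsetP => v /nbhdP[_ [u uX euv]].
exact: nbhd_independent indep (subsetP sXY u uX) euv.
Qed.

End GraphFacts.

Section Matchings.
Variables (T : finType) (e : rel T).
Implicit Types (M : {set {set T}}) (A B Z : {set T}) (u v : T) (f : T -> T).

Lemma is_edgeP A : reflect (exists u v, e u v /\ A = [set u; v]) (is_edge e A).
Proof.
apply: (iffP existsP) => [[u /existsP[v /andP[euv /eqP->]]]|[u [v [euv ->]]]].
  by exists u, v.
by exists u; apply/existsP; exists v; rewrite euv eqxx.
Qed.

Lemma is_edge_set2 u v : simple_graph e -> is_edge e [set u; v] = e u v.
Proof.
move=> [e_sym e_irr]; apply/is_edgeP/idP => [|euv]; last by exists u, v.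
case=> x [y [exy /setP eq_uv]].
have := eq_uv x; have := eq_uv y; have := eq_uv u; rewrite !inE !eqxx !orbT /=.
move=> /esym/orP[]/eqP ux /orP[]/eqP yuv /orP[]/eqP xuv; subst;
  by rewrite ?e_irr // e_sym in exy.
Qed.

Lemma matchingP M :
  reflect ({in M, forall A, is_edge e A} /\ trivIset M) (matching e M).
Proof. by apply: (iffP andP) => -[/forall_inP edges tri]; split=> //; apply/forall_inP. Qed.

Lemma leq_card_MM M : matching e M -> #|M| <= MM e.
Proof. by move=> mM; apply: (@leq_bigmax_cond _ (matching e)). Qed.

Lemma MM_attained : exists2 M, matching e M & #|M| = MM e.
Proof.
have [|M mM eqM] := @eq_bigmax_cond _ (matching e) (fun M => #|M|); last by exists M.
apply/card_gt0P; exists set0; apply/matchingP; split; first by move=> A; rewrite inE.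
by apply/trivIsetP => A; rewrite inE.
Qed.

Lemma is_edge_neq0 A : is_edge e A -> A != set0.
Proof. by case/is_edgeP=> u [v [_ ->]]; apply/set0Pn; exists u; rewrite !inE eqxx. Qed.

Lemma card_matchingU_le_MM M1 M2 :
    matching e M1 -> matching e M2 -> [disjoint cover M1 & cover M2] ->
  #|M1| + #|M2| <= MM e.
Proof.
move=> /matchingP[edge1 tri1] /matchingP[edge2 tri2] dis.
have dM : M1 :&: M2 = set0.
  apply/setP => A; rewrite !inE; apply/negbTE/andP => -[AM1 AM2].
  have /set0Pn[u uA] := is_edge_neq0 (edge1 A AM1).
  have uc1 : u \in cover M1 by apply/bigcupP; exists A.
  by have := disjointFr dis uc1; rewrite (_ : u \in cover M2) //; apply/bigcupP; exists A.
rewrite -cardsUI dM cards0 addn0.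
apply/leq_card_MM/matchingP; split; last exact: trivIsetU.
by move=> A /setUP[/edge1|/edge2].
Qed.

Definition pair_set (Z : {set T}) (f : T -> T) : {set {set T}} :=
  [set [set a; f a] | a in Z].

Lemma pair_set_matching Z B f :
    [disjoint Z & B] -> matches_into e Z B f ->
  [/\ matching e (pair_set Z f), #|pair_set Z f| = #|Z|
    & cover (pair_set Z f) \subset Z :|: B].
Proof.
move=> dZB [f_inj fP].
have fZ a b : a \in Z -> b \in Z -> (f a == b) = false.
  move=> aZ bZ; apply/negbTE; apply: contraTneq bZ => <-.
  by have [faB _] := fP a aZ; rewrite (disjointFl dZB faB).
have pairP a b : a \in Z -> b \in Z -> b \in [set a; f a] = (b == a).
  by move=> aZ bZ; rewrite !inE [b == f a]eq_sym fZ // orbF.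
split.
- apply/matchingP; split=> [_ /imsetP[a aZ ->]|].
    by apply/is_edgeP; exists a, (f a); have [_ ->] := fP a aZ.
  apply/trivIsetP => _ _ /imsetP[a aZ ->] /imsetP[b bZ ->] neq.
  have ab : a != b by apply: contraNneq neq => ->.
  rewrite -setI_eq0; apply/eqP/setP => c; rewrite !inE.
  apply/negbTE/andP => -[/orP[]/eqP-> /orP[]/eqP].
  + by move/eqP: ab.
  + by move/esym/eqP; rewrite fZ.
  + by move/eqP; rewrite fZ.
  + by move/f_inj => /(_ aZ bZ) /eqP; rewrite (negbTE ab).
- rewrite card_in_imset // => a b aZ bZ /= eq_ab.
  by apply/eqP; rewrite -(pairP b a bZ aZ) -eq_ab !inE eqxx.
apply/subsetP => c /bigcupP[_ /imsetP[a aZ ->]]; rewrite !inE => /orP[]/eqP->.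
  by rewrite aZ.
by have [-> _] := fP a aZ; rewrite orbT.
Qed.
End Matchings.

Lemma matching_imset (S T : finType) (e' : rel S) (e : rel T) (g : S -> T)
    (M : {set {set S}}) :
    injective g -> (forall u v : S, [set u; v] \in M -> e' u v -> e (g u) (g v)) ->
  matching e' M -> matching e [set g @: A | A : {set S} in M].
Proof.
move=> g_inj g_edge /matchingP[edges tri]; apply/matchingP; split.
  move=> _ /imsetP[A AM ->]; have /is_edgeP[u [v [euv defA]]] := edges A AM.
  apply/is_edgeP; exists (g u), (g v); split; first by apply: g_edge; rewrite -?defA.
  by rewrite defA imsetU1 imset_set1.
apply/trivIsetP => _ _ /imsetP[A AM ->] /imsetP[B BM ->] neq.
have AB : A != B by apply: contraNneq neq => ->.
rewrite -setI_eq0 -imsetI; last by move=> ? ? _ _; apply: g_inj.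
by rewrite imset_eq0 setI_eq0; apply: (trivIsetP tri).
Qed.

Lemma independent_surplus_matches_into (T : finType) (e : rel T) (Z : {set T}) y :
    independent e Z ->
    (forall Y : {set T}, Y \subset Z -> 0 < #|Y| -> #|Y| < #|nbhd e Y|) ->
  exists f, matches_into e Z (nbhd e Z :\ y) f.
Proof.
move=> indZ surplus; apply: Hall_marriage => Y sYZ.
have [->|Y0] := posnP #|Y|; first by [].
apply: leq_trans (_ : #|nbhd e Y :\ y| <= _).
  by have := surplus Y sYZ Y0; rewrite [#|nbhd e Y|](cardsD1 y); case: (y \in _); lia.
apply/subset_leq_card/subsetP => v /setD1P[vy vNY]; have /nbhdP[_ [u uY euv]] := vNY.
apply/nbhd_inP; split; last by exists u.
by rewrite in_setD1 vy (subsetP (nbhdS_independent indZ sYZ)).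
Qed.

Section RuleThree.
Variables (T : finType) (e : rel T) (Z : {set T}).
Local Notation V := (rr3_vertex e Z).
Local Notation e' := (rr3_edge e Z).

Lemma rr3_keepE v : (v \in rr3_keep e Z) = (v \notin Z) && (v \notin nbhd e Z).
Proof. by rewrite !inE negb_or. Qed.

Lemma rr3_simple : simple_graph e -> simple_graph e'.
Proof. by rewrite /simple_graph => -[e_sym e_irr]; split=> [[a|] [b|] | [a|]] //=. Qed.

Lemma rr3_matching_anchor M' :
    simple_graph e -> matching e' M' -> 0 < #|nbhd e Z| ->
  exists2 y, y \in nbhd e Z & forall w, [set None; Some w] \in M' -> e y (val w).
Proof.
move=> sG /matchingP[edges tri] N0.
have [/existsP[w0 w0M] | noM] := boolP [exists w, [set None; Some w] \in M'].
  have := edges _ w0M; rewrite is_edge_set2; last exact: rr3_simple.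
  move=> /setDP[/nbhdP[_ [y yN ey]] _].
  exists y => // w wM; suff -> : w = w0 by [].
  have : [set None; Some w] = [set None; Some w0].
    apply/eqP; apply: contraT => neq; have := trivIsetP tri _ _ wM w0M neq.
    by move/disjointFr/(_ (set21 _ _)); rewrite set21.
  by move/setP/(_ (Some w)); rewrite !inE /= eqxx => /esym/eqP[].
have [y yN] := card_gt0P N0; exists y => // w wM.
by case/existsP: noM; exists w.
Qed.

Lemma rr3_matching_expand M' y :
    simple_graph e -> matching e' M' -> y \in nbhd e Z ->
    (forall w, [set None; Some w] \in M' -> e y (val w)) ->
  let M := [set oapp val y @: A | A : {set V} in M'] in
  [/\ matching e M, #|M| = #|M'| & cover M \subset y |: rr3_keep e Z].
Proof.
move=> [e_sym _] mM' yN anchor M.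
have expand_inj : injective (oapp val y : V -> T).
  have yK : y \notin rr3_keep e Z by rewrite rr3_keepE yN andbF.
  move=> [a|] [b|] //= => [/val_inj-> // | eq_ay | eq_yb].
    by move: yK; rewrite -eq_ay (valP a).
  by move: yK; rewrite eq_yb (valP b).
split.
- apply: matching_imset expand_inj _ mM' => -[a|] [b|] //= uvM euv.
    by rewrite e_sym; apply: anchor; rewrite setUC.
  exact: anchor.
- exact/card_imset/imset_inj.
apply/subsetP => _ /bigcupP[_ /imsetP[A _ ->] /imsetP[[a|] _ ->]] /=.
  by rewrite setU1r ?(valP a).
by rewrite setU11.
Qed.

Lemma MM_rr3 :
    simple_graph e -> independent e Z -> 0 < #|nbhd e Z| ->
    (forall Y : {set T}, Y \subset Z -> 0 < #|Y| -> #|Y| < #|nbhd e Y|) ->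
  MM e' + #|Z| <= MM e.
Proof.
move=> sG indZ N0 surplus.
have [M' mM' <-] := MM_attained e'.
have [y yN anchor] := rr3_matching_anchor sG mM' N0.
have [m1 <- cover1] := rr3_matching_expand sG mM' yN anchor.
have [f f_match] := independent_surplus_matches_into y indZ surplus.
have dZN : [disjoint Z & nbhd e Z :\ y].
  by rewrite disjoints_subset; apply/subsetP => v vZ; rewrite !inE vZ /= andbF.
have [m2 <- cover2] := pair_set_matching dZN f_match.
apply: card_matchingU_le_MM m1 m2 _; apply: disjointW cover1 cover2 _.
have /nbhdP[yZ _] := yN.
rewrite disjoints_subset; apply/subsetP => v /setU1P[->|].
all: rewrite in_setC in_setU in_setD1.
  by rewrite (negbTE yZ) eqxx.
by rewrite rr3_keepE => /andP[/negbTE-> /negbTE->]; rewrite andbF.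
Qed.
End RuleThree.

Local Open Scope ring_scope.

Lemma big_option (R : nmodType) (S : finType) (F : option S -> R) :
  \sum_(o : option S) F o = F None + \sum_(s : S) F (Some s).
Proof.
rewrite (bigD1 None) //= (reindex_omap Some id) //=; last by case.
by congr (_ + _); apply: eq_bigl => s /=; rewrite eqxx.
Qed.

Section LPVC.
Variables (R : realType) (T : finType) (e : rel T).
Implicit Types (x : T -> R) (Y : {set T}).

Lemma lp_obj_ge0 x : lpvc_feasible e x -> 0 <= lp_obj x.
Proof. by case=> _ bounds; apply: sumr_ge0 => v _; case/andP: (bounds v). Qed.

Lemma LP_le_obj x : lpvc_feasible e x -> LP e R <= lp_obj x.
Proof.
move=> feas; apply: ge_inf; last by exists x.
by exists 0 => _ [y /lp_obj_ge0 ? <-].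
Qed.

Lemma LP_ge c : (forall x, lpvc_feasible e x -> c <= lp_obj x) -> c <= LP e R.
Proof.
move=> lb; apply: lb_le_inf => [|_ [x /lb ? <-] //].
exists (lp_obj (fun _ : T => 1 : R)), (fun=> 1) => //.
by split=> [u v _|v]; rewrite ?ler01 ?lexx ?lerDl.
Qed.

Lemma sum_indicator Y : \sum_(v : T) ((v \in Y)%:R : R) = #|Y|%:R.
Proof.
rewrite -natr_sum -sum1_card [in RHS]big_mkcond /=.
by congr _%:R; apply: eq_bigr => v _; case: (v \in Y).
Qed.

Definition half_shift Y (v : T) : R :=
  2^-1 * (1 + (v \in nbhd e Y)%:R - (v \in Y)%:R).

Lemma half_shift_in Y v : v \in Y -> half_shift Y v = 0.
Proof.
move=> vY; have /negbTE vN : v \notin nbhd e Y by apply: contraL vY => /nbhdP[].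
by rewrite /half_shift vY vN /=; lra.
Qed.

Lemma half_shift_nbhd Y v : v \in nbhd e Y -> half_shift Y v = 1.
Proof. by move=> vN; have /nbhdP[/negbTE vY _] := vN; rewrite /half_shift vY vN /=; lra. Qed.

Lemma half_shift_bounds Y v : v \notin Y -> 2^-1 <= half_shift Y v <= 1.
Proof.
move=> /negbTE vY; rewrite /half_shift vY.
by case: (v \in nbhd e Y) => /=; apply/andP; split; lra.
Qed.

Lemma half_shift_feasible Y :
  symmetric e -> independent e Y -> lpvc_feasible e (half_shift Y).
Proof.
move=> e_sym indep; split=> [u v euv|v].
  case uY: (u \in Y).
    by rewrite (half_shift_in uY) (half_shift_nbhd (nbhd_independent indep uY euv)); lra.
  case vY: (v \in Y).
    rewrite e_sym in euv.
    by rewrite (half_shift_in vY) (half_shift_nbhd (nbhd_independent indep vY euv)); lra.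
  have /andP[hu _] := half_shift_bounds (negbT uY).
  have /andP[hv _] := half_shift_bounds (negbT vY); lra.
case vY: (v \in Y); first by rewrite half_shift_in // lexx ler01.
by have /andP[hv ->] := half_shift_bounds (negbT vY); rewrite andbT; lra.
Qed.

Lemma lp_obj_half_shift Y :
  lp_obj (half_shift Y) = 2^-1 * (#|T|%:R + #|nbhd e Y|%:R - #|Y|%:R).
Proof.
rewrite /lp_obj /half_shift -mulr_sumr !big_split /= sumrN !sum_indicator.
by rewrite sumr_const.
Qed.

Lemma half_unique_opt_surplus Y :
    symmetric e -> half_unique_opt e R -> independent e Y -> (0 < #|Y|)%N ->
  (#|Y| < #|nbhd e Y|)%N.
Proof.
move=> e_sym [[_ half_opt] unique] indep /card_gt0P[y yY].
rewrite ltnNge; apply/negP => le_NY.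
have feas := half_shift_feasible e_sym indep.
have opt : lpvc_optimal e (half_shift Y).
  split=> //; apply/eqP; rewrite eq_le LP_le_obj // andbT -half_opt.
  rewrite lp_obj_half_shift /lp_obj sumr_const -mulr_natr mulrC.
  have : (#|nbhd e Y|%:R : R) <= #|Y|%:R by rewrite ler_nat.
  have : (0 : R) < 2^-1 by rewrite invr_gt0 ltr0n.
  nra.
have := unique _ opt y; rewrite half_shift_in // => /eqP.
by rewrite eq_sym invr_eq0 pnatr_eq0.
Qed.
End LPVC.

Section RuleThreeLP.
Variables (R : realType) (T : finType) (e : rel T) (Z : {set T}).
Local Notation V := (rr3_vertex e Z).
Local Notation e' := (rr3_edge e Z).

Lemma rr3_edge_insub u v :
    symmetric e -> independent e (nbhd e Z) -> e u v -> u \notin Z -> v \notin Z ->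
  e' (insub u) (insub v).
Proof.
move=> e_sym indN euv uZ vZ.
have inN w : w \notin Z -> w \notin rr3_keep e Z -> w \in nbhd e Z.
  by move=> wZ; rewrite rr3_keepE wZ negbK.
have inNN w w' : w \in nbhd e Z -> w' \notin Z -> e w w' -> w' \in nbhd e (nbhd e Z) :\: Z.
  by move=> wN w'Z ew; rewrite in_setD w'Z (nbhd_independent indN wN ew).
case: insubP => [a _ ua|uK]; case: insubP => [b _ vb|vK]; subst => //=.
- by apply: inNN (inN _ vZ vK) uZ _; rewrite e_sym.
- exact: inNN (inN _ uZ uK) vZ euv.
by move/independentP: indN => /(_ u v (inN _ uZ uK) (inN _ vZ vK)); rewrite euv.
Qed.

(* On N(Z), [insub v] is [None], the merged vertex z. *)
Definition rr3_lift (x' : V -> R) (v : T) : R :=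
  if v \in Z then 1 - x' None else x' (insub v).

Lemma rr3_lift_in x' v : v \in Z -> rr3_lift x' v = 1 - x' None.
Proof. by rewrite /rr3_lift => ->. Qed.

Lemma rr3_lift_nbhd x' v : v \in nbhd e Z -> rr3_lift x' v = x' None.
Proof.
move=> vN; have /nbhdP[/negbTE vZ _] := vN.
by rewrite /rr3_lift vZ insubF // rr3_keepE vN andbF.
Qed.

Lemma rr3_lift_keep x' (s : {v | v \in rr3_keep e Z}) :
  rr3_lift x' (val s) = x' (Some s).
Proof.
have := valP s; rewrite rr3_keepE => /andP[/negbTE sZ _].
by rewrite /rr3_lift sZ valK.
Qed.

Lemma rr3_lift_feasible x' :
    symmetric e -> independent e Z -> independent e (nbhd e Z) ->
  lpvc_feasible e' x' -> lpvc_feasible e (rr3_lift x').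
Proof.
move=> e_sym indZ indN [x'_edge x'_bounds]; split=> [u v euv|v].
  case uZ: (u \in Z).
    by rewrite rr3_lift_in // rr3_lift_nbhd ?(nbhd_independent indZ uZ euv) //; lra.
  case vZ: (v \in Z).
    rewrite e_sym in euv.
    by rewrite addrC rr3_lift_in // rr3_lift_nbhd ?(nbhd_independent indZ vZ euv) //; lra.
  by rewrite /rr3_lift uZ vZ; apply/x'_edge/rr3_edge_insub; rewrite ?uZ ?vZ.
rewrite /rr3_lift; case: ifP => _ //.
by have /andP[? ?] := x'_bounds None; apply/andP; split; lra.
Qed.

Lemma lp_obj_rr3_lift x' :
  #|nbhd e Z| = (#|Z| + 1)%N -> lp_obj (rr3_lift x') = #|Z|%:R + lp_obj x'.
Proof.
move=> cardN; rewrite /lp_obj big_option (bigID (mem Z)) /=.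
rewrite (eq_bigr (fun=> 1 - x' None)); last by move=> v /rr3_lift_in.
rewrite [X in _ + X](bigID (mem (nbhd e Z))) /=.
have -> : \sum_(v | (v \notin Z) && (v \in nbhd e Z)) rr3_lift x' v
          = x' None *+ #|nbhd e Z|.
  rewrite (eq_bigl (mem (nbhd e Z))) => [|v]; last by rewrite andb_idl // => /nbhdP[].
  by rewrite (eq_bigr (fun=> x' None)) ?sumr_const // => v /rr3_lift_nbhd.
have -> : \sum_(v | (v \notin Z) && (v \notin nbhd e Z)) rr3_lift x' v
          = \sum_s x' (Some s).
  rewrite (eq_bigl (mem (rr3_keep e Z))) => [|v]; last by rewrite /= rr3_keepE.
  by rewrite big_sub; apply: eq_bigr => s _; rewrite rr3_lift_keep.
by rewrite sumr_const cardN addn1 mulrSr mulrnBl; lra.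
Qed.

Lemma LP_rr3 :
    symmetric e -> independent e Z -> independent e (nbhd e Z) ->
    #|nbhd e Z| = (#|Z| + 1)%N ->
  LP e R - #|Z|%:R <= LP e' R.
Proof.
move=> e_sym indZ indN cardN; apply: LP_ge => x' feas.
have := LP_le_obj (rr3_lift_feasible e_sym indZ indN feas).
by rewrite lp_obj_rr3_lift //; lra.
Qed.
End RuleThreeLP.

Theorem lemma9 (R : realType) (T : finType) (e : rel T) (k : nat) (Z : {set T}) :
  simple_graph e ->
  (* (i) all-1/2 is the unique optimum of LPVC(G) *)
  half_unique_opt e R ->
  (* (ii) no independent set with surplus 1 and non-independent neighbourhood *)
  (forall Y : {set T}, independent e Y -> surplus e Y = 1 ->
     independent e (nbhd e Y)) ->
  (* (iii) Z is independent, surplus 1, N(Z) independent *)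
  independent e Z -> surplus e Z = 1 -> independent e (nbhd e Z) ->
  let e' := rr3_edge e Z in
  let k' : R := k%:R - #|Z|%:R in
  k' + (MM e')%:R - 2 * LP e' R <= k%:R + (MM e)%:R - 2 * LP e R.
Proof.
move=> sG half_opt _ indZ surplusZ indN /=.
have cardN : #|nbhd e Z| = (#|Z| + 1)%N by move: surplusZ; rewrite /surplus; lia.
have surplus_pos (Y : {set T}) : Y \subset Z -> (0 < #|Y|)%N -> (#|Y| < #|nbhd e Y|)%N.
  by move=> sYZ; apply: half_unique_opt_surplus sG.1 half_opt (independentS sYZ indZ).
have N0 : (0 < #|nbhd e Z|)%N by rewrite cardN addn1.
have := MM_rr3 sG indZ N0 surplus_pos; rewrite -(ler_nat R) natrD.
have := LP_rr3 R sG.1 indZ indN cardN; lra.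
Qed.
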